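(* Let $t\in((0,1)\cup(1,\infty))\cap\mathbb Q$ be a reduced fraction. Define a word $w$ in the alphabet $\{p,q,r\}$ as follows. If $0<t<1$: for each subword of $\omega_t$ lying between two consecutive occurrences of $z^{\pm1}$, assign the letter $p$ if the subword is of the form $y^{\pm1}$ and the letter $q$ if it is of the form $y^{\pm1}x^{\pm1}y^{\pm1}$; let $w$ be the concatenation of these letters in the order in which the subwords occur in $\omega_t$. If $1<t<\infty$: for each subword of $\omega_t$ lying between two consecutive occurrences of $x^{\pm1}$, assign $q$ if the subword is of the form $y^{\pm1}z^{\pm1}y^{\pm1}$ and $r$ if it is of the form $y^{\pm1}$; let $w$ be the concatenation in order. Then the Cohn word $c_t$ satisfies $c_t=pwq$ if $0<t<1$, and $c_t=qwr$ if $1<t<\infty$.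
   Context: Modified lattice: the planar graph with vertex set $\mathbb Z^2$ whose edges are the horizontal unit segments, the vertical unit segments, and the diagonal segments of slope $-1$ joining $(i,j+1)$ and $(i+1,j)$. Words $\omega_t$: for reduced $t=a/b\in(0,\infty)$, let $L_t$ be the segment from $(0,0)$ to $(b,a)$, oriented from $(0,0)$ to $(b,a)$. List the edges of the modified lattice whose relative interior meets $L_t$, in the order of the intersection points along $L_t$. A horizontal (resp. diagonal, vertical) edge contributes $x$ (resp. $y$, $z$) if its midpoint is not on the right-hand side of $L_t$ (including lying on $L_t$), and $x^{-1}$ (resp. $y^{-1}$, $z^{-1}$) if its midpoint is on the right-hand side. $\omega_t$ is the concatenation of these letters. Cohn word $c_t$ (a word in the free monoid on $\{p,q,r\}$): for reduced $t=a/b\in(0,\infty)$, consider $L_t$ in the ordinary integer grid of $\mathbb R^2$. Each time $L_t$ meets a grid line, take the lattice point adjacent to that intersection on the right-hand side of the oriented segment (if the intersection is itself a lattice point, that lattice point is recorded). Record these lattice points in order as $P_1=(0,0),P_2,\dots,P_n=(b,a)$, discarding repetitions, and join consecutive points by segments. Each segment of slope $0$, $1$, $\infty$ is assigned the letter $p$, $q$, $r$ respectively; $c_t$ is the sequence of these letters in order. (E.g. $c_{2/5}=p^2qpq$ and $c_{5/2}=qrqr^2$.) *)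

From mathcomp Require Import all_boot all_order all_algebra.
Set Implicit Arguments. Unset Strict Implicit. Unset Printing Implicit Defensive.
Import Order.TTheory GRing.Theory Num.Theory.
Local Open Scope ring_scope.

(* t = a/b reduced, a b positive coprime naturals.  L_t = segment from (0,0)
   to (b,a), i.e. the points s *(b,a), 0 <= s <= 1.  Points are pairs of rats. *)
Definition pt := (rat * rat)%type.
Definition cross (u v : pt) : rat := u.1 * v.2 - u.2 * v.1.
Definition dirL (a b : nat) : pt := (b%:R, a%:R).
Definition on_right (a b : nat) (P : pt) : bool := cross (dirL a b) P < 0.

(* letters x, y, z with exponent: (g, true) = g, (g, false) = g^-1 *)
Inductive gen := gx | gy | gz.
Definition sletter := (gen * bool)%type.

(* edges of the modified lattice:
   EH i j : (i,j)--(i+1,j)     (horizontal, letter x)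
   ED i j : (i,j+1)--(i+1,j)   (diagonal of slope -1, letter y)
   EV i j : (i,j)--(i,j+1)     (vertical, letter z) *)
Inductive ekind := EH | ED | EV.
Definition edge := (ekind * int * int)%type.

Definition edge_ends (e : edge) : pt * pt :=
  let: (k, i, j) := e in
  match k with
  | EH => ((i%:~R, j%:~R), ((i + 1)%:~R, j%:~R))
  | ED => ((i%:~R, (j + 1)%:~R), ((i + 1)%:~R, j%:~R))
  | EV => ((i%:~R, j%:~R), (i%:~R, (j + 1)%:~R))
  end.

Definition edge_vec (e : edge) : pt :=
  let: (P0, P1) := edge_ends e in (P1.1 - P0.1, P1.2 - P0.2).

(* Solving P0 + u (P1 - P0) = s (b,a): u and s below (the edge is never
   parallel to L_t when a, b > 0, so cross (edge_vec e) (dirL a b) <> 0). *)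
Definition edge_u (a b : nat) (e : edge) : rat :=
  - cross (edge_ends e).1 (dirL a b) / cross (edge_vec e) (dirL a b).
Definition edge_s (a b : nat) (e : edge) : rat :=
  cross (edge_ends e).1 (edge_vec e) / cross (dirL a b) (edge_vec e).

(* the relative interior of e meets the segment L_t *)
Definition meets (a b : nat) (e : edge) : bool :=
  [&& cross (edge_vec e) (dirL a b) != 0,
      0 < edge_u a b e < 1 & 0 <= edge_s a b e <= 1].

(* candidate edges: all edges with i in [-1, b], j in [-1, a]; every edge
   whose relative interior meets L_t (contained in [0,b]x[0,a]) is among them *)
Definition idx_range (n : nat) : seq int := [seq (k%:Z - 1)%R | k <- iota 0 n.+3].
Definition cand_edges (a b : nat) : seq edge :=
  [seq (ki.1, ki.2, j) | ki <- [seq (k, i) | k <- [:: EH; ED; EV], i <- idx_range b],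
                         j <- idx_range a].

Definition crossed_edges (a b : nat) : seq edge :=
  sort (fun e1 e2 => edge_s a b e1 <= edge_s a b e2) [seq e <- cand_edges a b | meets a b e].

Definition edge_gen (e : edge) : gen :=
  match e.1.1 with EH => gx | ED => gy | EV => gz end.
Definition edge_mid (e : edge) : pt :=
  let: (P0, P1) := edge_ends e in ((P0.1 + P1.1) / 2, (P0.2 + P1.2) / 2).
Definition edge_letter (a b : nat) (e : edge) : sletter :=
  (edge_gen e, ~~ on_right a b (edge_mid e)).

Definition omega (a b : nat) : seq sletter := map (edge_letter a b) (crossed_edges a b).

Fixpoint split_at (sep : pred sletter) (w : seq sletter) : seq (seq sletter) :=
  match w with
  | [::] => [:: [::]]
  | l :: w' => let r := split_at sep w' in
               if sep l then [::] :: r else (l :: head [::] r) :: behead r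
  end.
Definition between_seps (sep : pred sletter) (w : seq sletter) : seq (seq sletter) :=
  let ps := split_at sep w in take (size ps - 2) (behead ps).

Definition is_gen (g : gen) (l : sletter) : bool :=
  match g, l.1 with gx, gx | gy, gy | gz, gz => true | _, _ => false end.

Inductive cletter := cp | cq | cr.

Fixpoint optseq (A : Type) (s : seq (option A)) : option (seq A) :=
  match s with
  | [::] => Some [::]
  | o :: s' => match o, optseq s' with Some x, Some r => Some (x :: r) | _, _ => None end
  end.

(* the word w of the theorem, case 0 < t < 1 (None if some subword has
   neither of the two forms) *)
Definition chunk_lt (c : seq sletter) : option cletter :=
  match c with
  | [:: (gy, _)] => Some cp
  | [:: (gy, _); (gx, _); (gy, _)] => Some cq
  | _ => None
  end.
Definition w_lt (a b : nat) : option (seq cletter) :=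
  optseq (map chunk_lt (between_seps (is_gen gz) (omega a b))).

Definition chunk_gt (c : seq sletter) : option cletter :=
  match c with
  | [:: (gy, _); (gz, _); (gy, _)] => Some cq
  | [:: (gy, _)] => Some cr
  | _ => None
  end.
Definition w_gt (a b : nat) : option (seq cletter) :=
  optseq (map chunk_gt (between_seps (is_gen gx) (omega a b))).

(* Recorded lattice point for an intersection Q of L_t with a grid line, Q lying
   on the grid line through the lattice points lo and lo + step (step = (0,1) for
   a vertical line, (1,0) for a horizontal one): Q itself if Q is a lattice
   point, otherwise the adjacent lattice point on the right-hand side. *)
Definition ipt := (int * int)%type.
Definition ipt2pt (P : ipt) : pt := (P.1%:~R, P.2%:~R).

Definition vrecord (a b : nat) (i : nat) : rat * ipt :=
  let s : rat := i%:R / b%:R in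
  let y : rat := s * a%:R in
  let fy := Num.floor y in
  if fy%:~R == y then (s, (i%:Z, fy))
  else let lo := (i%:Z, fy) in let hi := (i%:Z, fy + 1) in
       (s, if on_right a b (ipt2pt lo) then lo else hi).
Definition hrecord (a b : nat) (j : nat) : rat * ipt :=
  let s : rat := j%:R / a%:R in
  let x : rat := s * b%:R in
  let fx := Num.floor x in
  if fx%:~R == x then (s, (fx, j%:Z))
  else let lo := (fx, j%:Z) in let hi := (fx + 1, j%:Z) in
       (s, if on_right a b (ipt2pt lo) then lo else hi).

Definition cohn_points (a b : nat) : seq ipt :=
  undup (map snd (sort (fun r1 r2 : rat * ipt => r1.1 <= r2.1)
                       (map (vrecord a b) (iota 0 b.+1) ++ map (hrecord a b) (iota 0 a.+1)))).

Definition seg_letter (P1 P2 : ipt) : option cletter :=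
  let dx := P2.1 - P1.1 in let dy := P2.2 - P1.2 in
  if (dy == 0) && (dx != 0) then Some cp
  else if (dx == dy) && (dx != 0) then Some cq
  else if (dx == 0) && (dy != 0) then Some cr
  else None.

Definition cohn_word (a b : nat) : option (seq cletter) :=
  let P := cohn_points a b in optseq (map (fun pq => seg_letter pq.1 pq.2) (zip P (behead P))).

(* For 0 < t = a/b < 1 the segment L_t runs through the vertical strips
   k <= x <= k+1 (0 <= k < b) one after the other.  It enters strip k through the
   vertical edge at height floor(ka/b) (for k > 0), crosses the diagonal edge of the
   cell in that row and, if it climbs above height floor(ka/b) + 1 strictly inside
   the strip, also a horizontal edge and the diagonal edge of the next cell;
   coprimality keeps it away from lattice points other than its endpoints.  Hence
   the subwords of omega_t between consecutive z's are y or yxy.  The Cohn points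
   are (k, floor(ka/b)), and the k-th segment is diagonal exactly when L_t climbs
   inside strip k, except in the first and last strips, which give c_t = p w q.
   For t > 1, reflection in the diagonal reduces omega_t to omega_(1/t) with x and
   z exchanged, while the Cohn points are (ceil(kb/a), k). *)

From HB Require Import structures.
From mathcomp Require Import all_boot all_order all_algebra zify ring lra.
Set Implicit Arguments. Unset Strict Implicit. Unset Printing Implicit Defensive.
Import Order.TTheory GRing.Theory Num.Theory.
Local Open Scope ring_scope.

Lemma sort_perm_key_sorted (T : eqType) d (K : orderType d) (key : T -> K) (s l : seq T) :
  sorted (relpre key <%O) l -> perm_eq s l -> sort (relpre key <=%O) s = l.
Proof.
move=> sorted_l perm_sl.
have key_uniq : uniq (map key l).
  by move: sorted_l; rewrite -sorted_map lt_sorted_uniq_le => /andP[].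
have perm_sort_l : perm_eq (sort (relpre key <=%O) s) l by rewrite perm_sort.
apply: (irr_sorted_eq (leT := relpre key <%O)) => //.
- by move=> y x z; apply: lt_trans.
- by move=> x; apply: ltxx.
- rewrite -sorted_map lt_sorted_uniq_le (perm_uniq (perm_map key perm_sort_l)) key_uniq.
  by rewrite sorted_map sort_sorted // => x y; apply: le_total.
- by move=> x; rewrite (perm_mem perm_sort_l).
Qed.

Lemma sorted_flatten_blocks (T : eqType) d (K : orderType d) (key : T -> K)
    (g : nat -> K) (D : nat -> seq T) m n :
  {homo g : i j / (i <= j)%N >-> (i <= j)%O} ->
  (forall k, (m <= k < m + n)%N ->
     sorted (relpre key <%O) (D k) && all (fun x => (g k <= key x < g k.+1)%O) (D k)) ->
  sorted (relpre key <%O) (flatten [seq D k | k <- iota m n]).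
Proof.
move=> g_mono; elim: n m => [|n IH] m D_sorted //=.
have lt_trans' : transitive (relpre key <%O) by move=> y x z; apply: lt_trans.
rewrite sorted_pairwise // pairwise_cat -!sorted_pairwise //.
have m_in : (m <= m < m + n.+1)%N by lia.
have /andP[-> D_in] := D_sorted m m_in.
rewrite IH ?andbT => [|k k_in]; last by apply: D_sorted; lia.
have rest_ge : all (fun y => (g m.+1 <= key y)%O) (flatten [seq D k | k <- iota m.+1 n]).
  apply/allP => y /flatten_mapP[k]; rewrite mem_iota => k_in.
  have k_in' : (m <= k < m + n.+1)%N by lia.
  have /andP[_ /allP D_ge] := D_sorted k k_in'.
  by move=> /D_ge /andP[+ _]; apply: le_trans; apply: g_mono; lia.
apply/allP => x /(allP D_in) /andP[_ x_lt]; apply/allP => y /(allP rest_ge).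
exact: lt_le_trans.
Qed.

Lemma undup_sort_snd d (K : orderType d) (T : eqType) (R : seq (K * T))
    (idx : K * T -> nat) (P : nat -> T) N :
  injective P ->
  {in R, forall r, r.2 = P (idx r) /\ (idx r <= N)%N} ->
  {in R &, forall r1 r2, (r1.1 <= r2.1)%O -> (idx r1 <= idx r2)%N} ->
  (forall n, (n <= N)%N -> exists2 r, r \in R & idx r = n) ->
  undup (map snd (sort (fun r1 r2 => (r1.1 <= r2.1)%O) R)) = map P (iota 0 N.+1).
Proof.
move=> P_inj R_P idx_mono idx_onto.
set S := sort _ R; have memS : S =i R := mem_sort _ R.
have -> : map snd S = map P (map idx S).
  by rewrite -map_comp; apply/eq_in_map => r; rewrite memS => /R_P[].
rewrite undup_map_inj //; congr map.
have sorted_idx : sorted leq (map idx S).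
  rewrite sorted_map; apply: (@sub_in_sorted _ [in R]) (sort_sorted _ R).
  - by move=> r1 r2; apply: idx_mono.
  - by apply/allP => r; rewrite memS.
  - by move=> r1 r2; apply: le_total.
apply: (irr_sorted_eq ltn_trans ltnn).
- by rewrite ltn_sorted_uniq_leq undup_uniq (subseq_sorted leq_trans (undup_subseq _)).
- exact: iota_ltn_sorted.
- move=> n; rewrite mem_undup mem_iota /=; apply/mapP/idP => [[r]|n_le].
    by rewrite memS => /R_P[_ +] ->.
  by have [r r_in <-] := idx_onto n n_le; exists r; rewrite ?memS.
Qed.

Lemma zip_behead_iota (T : Type) (P : nat -> T) m n :
  zip (map P (iota m n.+1)) (behead (map P (iota m n.+1))) = [seq (P k, P k.+1) | k <- iota m n].
Proof. by elim: n m => [|n IH] m //=; rewrite -IH. Qed.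

Lemma optseq_Some (A : Type) (s : seq A) : optseq (map Some s) = Some s.
Proof. by elim: s => //= x s ->. Qed.

Lemma iota0_first_last n : (1 < n)%N -> iota 0 n = 0%N :: rcons (iota 1 n.-2) n.-1.
Proof.
by case: n => [|[|n]] // _; rewrite (iotaD 0 1 n.+1) -[n.+1]addn1 iotaD cats1 /= add0n addn1.
Qed.

Lemma split_at_cat (sep : pred sletter) u v : all (predC sep) u ->
  split_at sep (u ++ v) = (u ++ head [::] (split_at sep v)) :: behead (split_at sep v).
Proof.
elim: u => [|l u IH] /=; first by case: v => //= l v; case: (sep l).
by case/andP=> /negbTE -> /IH ->.
Qed.

Lemma between_seps_blocks (I : Type) (sep : pred sletter) (z : I -> sletter)
    (c : I -> seq sletter) c0 (ks : seq I) :
  all (predC sep) c0 -> (forall k, sep (z k) && all (predC sep) (c k)) ->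
  between_seps sep (c0 ++ flatten [seq z k :: c k | k <- ks]) = map c (take (size ks).-1 ks).
Proof.
move=> c0_free blocks_ok; rewrite /between_seps /=.
have -> : split_at sep (c0 ++ flatten [seq z k :: c k | k <- ks]) = c0 :: map c ks.
  elim: ks c0 c0_free => [|k ks IH] c0 c0_free /=; first by rewrite split_at_cat //= !cats0.
  have /andP[z_sep c_free] := blocks_ok k.
  by rewrite split_at_cat //= z_sep IH ?cats0.
by rewrite /= size_map subSS subn1 map_take.
Qed.

Lemma ratio_open01 (R : numFieldType) (n : int) (d : nat) : (0 < d)%N ->
  (0 < (n%:~R / d%:R : R) < 1) = (0 < n < d%:Z).
Proof.
move=> d_gt0; rewrite ltr_pdivlMr ?ltr0n // mul0r ltr_pdivrMr ?ltr0n // mul1r.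
by rewrite ltr0z -[d%:R]/((d%:Z)%:~R : R) ltr_int.
Qed.

Lemma ratio_closed01 (R : numFieldType) (n : int) (d : nat) : (0 < d)%N ->
  (0 <= (n%:~R / d%:R : R) <= 1) = (0 <= n <= d%:Z).
Proof.
move=> d_gt0; rewrite ler_pdivlMr ?ltr0n // mul0r ler_pdivrMr ?ltr0n // mul1r.
by rewrite ler0z -[d%:R]/((d%:Z)%:~R : R) ler_int.
Qed.

Lemma ltr_ratio (R : numFieldType) (m n : int) (d e : nat) : (0 < d)%N -> (0 < e)%N ->
  ((m%:~R / d%:R : R) < n%:~R / e%:R) = (m * e < n * d).
Proof.
move=> d_gt0 e_gt0; rewrite ltr_pdivrMr ?ltr0n // mulrAC ltr_pdivlMr ?ltr0n //.
by rewrite -!(rmorphM _ _ (Posz _)) ltr_int.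
Qed.

Lemma ler_ratio (R : numFieldType) (m n : int) (d e : nat) : (0 < d)%N -> (0 < e)%N ->
  ((m%:~R / d%:R : R) <= n%:~R / e%:R) = (m * e <= n * d).
Proof.
move=> d_gt0 e_gt0; rewrite ler_pdivrMr ?ltr0n // mulrAC ler_pdivlMr ?ltr0n //.
by rewrite -!(rmorphM _ _ (Posz _)) ler_int.
Qed.

Lemma floor_ratio (R : archiNumFieldType) (n d : nat) : (0 < d)%N ->
  Num.floor (n%:R / d%:R : R) = (n %/ d)%N.
Proof.
move=> d_gt0; apply: floor_def; rewrite intrD ler_pdivlMr ?ltr0n // ltr_pdivrMr ?ltr0n //.
rewrite (_ : ((n %/ d)%N%:~R : R) = (n %/ d)%:R) // natr1.
by rewrite -!natrM ler_nat ltr_nat; nia.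
Qed.

Lemma divn_ratioE (R : numFieldType) (n d : nat) : (0 < d)%N ->
  (((n %/ d)%N%:~R : R) == n%:R / d%:R) = (n %/ d * d == n)%N.
Proof.
move=> d_gt0; have d_neq0 : (d%:R : R) != 0 by rewrite gt_eqF ?ltr0n.
apply/eqP/eqP => exact_div; last by rewrite -[in RHS]exact_div natrM mulfK.
by apply/eqP; rewrite -(eqr_nat R) natrM -[_%:R]/((n %/ d)%N%:~R : R) exact_div mulfVK.
Qed.

(** * Floors and ceilings along L_t *)

Definition yfloor (a b x : nat) : nat := (x * a %/ b)%N.
Definition xceil (a b y : nat) : nat := ((y * b + a.-1) %/ a)%N.
(* L_t reaches height floor(ka/b) + 1 strictly before the abscissa k + 1. *)
Definition climbs (a b k : nat) : bool := ((yfloor a b k).+1 * b < k.+1 * a)%N.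

Section FloorCeil.
Variables a b : nat.
Local Open Scope nat_scope.

Lemma yfloor_spec x : 0 < b -> yfloor a b x * b <= x * a < yfloor a b x * b + b.
Proof. by rewrite /yfloor => b_gt0; nia. Qed.

Lemma yfloor_unique x m : 0 < b -> m * b <= x * a < m * b + b -> yfloor a b x = m.
Proof. by move=> b_gt0; have := yfloor_spec x b_gt0; nia. Qed.

Lemma xceil_spec y : 0 < a -> y * b <= xceil a b y * a < y * b + a.
Proof. by rewrite /xceil => a_gt0; nia. Qed.

Lemma xceil_unique y m : 0 < a -> y * b <= m * a < y * b + a -> xceil a b y = m.
Proof. by move=> a_gt0; have := xceil_spec y a_gt0; nia. Qed.

Lemma yfloor_lt x : coprime a b -> 0 < x < b -> yfloor a b x * b < x * a.
Proof.
move=> cop /andP[x_gt0 x_lt]; have b_gt0 : 0 < b by lia.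
have : ~~ (b %| x * a).
  by rewrite Gauss_dvdl 1?coprime_sym //; apply/negP => /(dvdn_leq x_gt0); lia.
by rewrite dvdn_eq; have := yfloor_spec x b_gt0; rewrite /yfloor; lia.
Qed.

Lemma yfloor_succ x : coprime a b -> a <= b -> x.+1 < b ->
  yfloor a b x.+1 = yfloor a b x + climbs a b x.
Proof.
move=> cop ab x_lt; have b_gt0 : 0 < b by lia.
have x1_in : 0 < x.+1 < b by rewrite x_lt.
have := yfloor_lt cop x1_in.
have := yfloor_spec x b_gt0; have := yfloor_spec x.+1 b_gt0.
by rewrite /climbs; case: ltnP => /=; nia.
Qed.

Lemma yfloor_xceil y : 0 < a -> a <= b -> yfloor a b (xceil a b y) = y.
Proof. by move=> a_gt0 ab; apply: yfloor_unique; have := xceil_spec y a_gt0; nia. Qed.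

Lemma xceil_yfloor x : 0 < b -> b <= a -> xceil a b (yfloor a b x) = x.
Proof. by move=> b_gt0 ba; apply: xceil_unique; have := yfloor_spec x b_gt0; nia. Qed.

End FloorCeil.

Lemma xceil_succ_yfloor a b y : coprime a b -> (0 < y < a)%N ->
  xceil a b y = (yfloor b a y).+1.
Proof.
move=> cop y_in; have a_gt0 : (0 < a)%N by lia.
have cop' : coprime b a by rewrite coprime_sym.
have := yfloor_lt cop' y_in; have := yfloor_spec b y a_gt0.
by move=> *; apply: xceil_unique; nia.
Qed.

(** * The edges crossed by L_t *)

Definition ekind_eqb (k1 k2 : ekind) : bool :=
  match k1, k2 with EH, EH | ED, ED | EV, EV => true | _, _ => false end.
Lemma ekind_eqP : Equality.axiom ekind_eqb. Proof. by do 2 case; constructor. Qed.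
HB.instance Definition _ := hasDecEq.Build ekind ekind_eqP.

Lemma edge_vecE (i j : int) :
  [/\ edge_vec (EH, i, j) = (1, 0), edge_vec (ED, i, j) = (1, -1)
     & edge_vec (EV, i, j) = (0, 1)].
Proof. by rewrite /edge_vec /= !intrD; split; congr (_, _); ring. Qed.

Section EdgeCrossings.
Variables (a b : nat) (i j : int).
Hypotheses (a_gt0 : (0 < a)%N) (b_gt0 : (0 < b)%N).
Let a_neq0 : (a%:R : rat) != 0. Proof. by rewrite gt_eqF ?ltr0n. Qed.
Let b_neq0 : (b%:R : rat) != 0. Proof. by rewrite gt_eqF ?ltr0n. Qed.
Let ab_neq0 : (a%:R + b%:R : rat) != 0.
Proof. by rewrite -natrD gt_eqF // ltr0n addn_gt0 a_gt0. Qed.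

Lemma edge_s_EV : edge_s a b (EV, i, j) = i%:~R / b%:R.
Proof. by have [_ _ v] := edge_vecE i j; rewrite /edge_s v /cross /=; field. Qed.

Lemma edge_s_EH : edge_s a b (EH, i, j) = j%:~R / a%:R.
Proof. by have [v _ _] := edge_vecE i j; rewrite /edge_s v /cross /=; field. Qed.

Lemma edge_s_ED : edge_s a b (ED, i, j) = (i + j + 1)%:~R / (a + b)%:R.
Proof.
have [_ v _] := edge_vecE i j; rewrite /edge_s v /cross /= !intrD natrD.
by rewrite [X in _ / X](_ : _ = - (a%:R + b%:R)); [field | ring].
Qed.

Lemma meets_EV : meets a b (EV, i, j) = (0 < i * a - j * b < b) && (0 <= i <= b).
Proof.
have [_ _ v] := edge_vecE i j; rewrite /meets edge_s_EV /edge_u v /cross /=.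
rewrite [X in X != 0](_ : _ = - b%:R); last ring.
rewrite [X in 0 < X < 1](_ : _ = (i * a - j * b)%:~R / b%:R); last first.
  by rewrite rmorphB !rmorphM /=; field.
by rewrite oppr_eq0 b_neq0 ratio_open01 // ratio_closed01.
Qed.

Lemma meets_EH : meets a b (EH, i, j) = (0 < j * b - i * a < a) && (0 <= j <= a).
Proof.
have [v _ _] := edge_vecE i j; rewrite /meets edge_s_EH /edge_u v /cross /=.
rewrite [X in X != 0](_ : _ = a%:R); last ring.
rewrite [X in 0 < X < 1](_ : _ = (j * b - i * a)%:~R / a%:R); last first.
  by rewrite rmorphB !rmorphM /=; field.
by rewrite a_neq0 ratio_open01 // ratio_closed01.
Qed.

Lemma meets_ED : meets a b (ED, i, j) =
  (0 < (j + 1) * b - i * a < (a + b)%N) && (0 <= i + j + 1 <= (a + b)%N).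
Proof.
have [_ v _] := edge_vecE i j; rewrite /meets edge_s_ED /edge_u v /cross /=.
rewrite [X in X != 0](_ : _ = a%:R + b%:R); last ring.
rewrite [X in 0 < X < 1](_ : _ = ((j + 1) * b - i * a)%:~R / (a + b)%:R); last first.
  by rewrite rmorphB !rmorphM /= natrD; field.
by rewrite ab_neq0 ratio_open01 ?ratio_closed01 // addn_gt0 a_gt0.
Qed.
End EdgeCrossings.

Lemma mem_idx_range n (x : int) : (x \in idx_range n) = (-1 <= x <= n%:Z + 1).
Proof.
apply/mapP/idP => [[k]|x_in]; first by rewrite mem_iota => /andP[_ k_lt] ->; lia.
by exists (absz (x + 1)); [rewrite mem_iota | ]; lia.
Qed.

Lemma mem_cand_edges a b k (i j : int) :
  ((k, i, j) \in cand_edges a b) = (-1 <= i <= b%:Z + 1) && (-1 <= j <= a%:Z + 1).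
Proof.
rewrite -!mem_idx_range; apply/allpairsP/andP => [[[[k' i'] j'] [ki_in j_in e]]|[i_in j_in]].
  case/allpairsP: ki_in => [[k'' i''] [_ i_in e']].
  by case: e => _ -> ->; case: e' => _ ->.
exists (k, i, j); split => //; apply/allpairsP; exists (k, i); split => //.
by case: k; rewrite !inE.
Qed.

Lemma uniq_cand_edges a b : uniq (cand_edges a b).
Proof.
have idx_uniq n : uniq (idx_range n) by rewrite map_inj_uniq ?iota_uniq // => x y /eqP; lia.
apply: allpairs_uniq => //; last by move=> [[? ?] ?] [[? ?] ?] _ _ [-> -> ->].
by apply: allpairs_uniq => // [[? ?] [? ?]] _ _ [-> ->].
Qed.

Lemma meets_cand_edges a b e : (0 < a)%N -> (0 < b)%N ->
  meets a b e -> e \in cand_edges a b.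
Proof.
move=> a_gt0 b_gt0; case: e => [[[] i j]];
  rewrite ?meets_EH ?meets_ED ?meets_EV // mem_cand_edges; nia.
Qed.

Lemma crossed_edgesE a b (l : seq edge) : (0 < a)%N -> (0 < b)%N ->
  sorted (relpre (edge_s a b) <%O) l -> (forall e, meets a b e = (e \in l)) ->
  crossed_edges a b = l.
Proof.
move=> a_gt0 b_gt0 sorted_l mem_l; apply: sort_perm_key_sorted => //.
apply: uniq_perm; first by rewrite filter_uniq ?uniq_cand_edges.
  by apply: sorted_uniq sorted_l => [y x z|x]; [apply: lt_trans | apply: ltxx].
move=> e; rewrite mem_filter -mem_l andb_idr //; exact: meets_cand_edges.
Qed.

(* Reflection in the line y = x; it maps the edges crossed by L_(b/a) onto those
   crossed by L_(a/b). *)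
Definition edge_swap (e : edge) : edge :=
  match e with
  | (EH, i, j) => (EV, j, i)
  | (ED, i, j) => (ED, j, i)
  | (EV, i, j) => (EH, j, i)
  end.

Lemma edge_swapK : involutive edge_swap. Proof. by case=> [[[] i j]]. Qed.

Section Swap.
Variables (a b : nat) (e : edge).
Hypotheses (a_gt0 : (0 < a)%N) (b_gt0 : (0 < b)%N).

Lemma meets_swap : meets a b (edge_swap e) = meets b a e.
Proof.
case: e => [[[] i j]] /=; rewrite ?meets_EV ?meets_EH ?meets_ED //.
by apply/idP/idP; lia.
Qed.

Lemma edge_s_swap : edge_s a b (edge_swap e) = edge_s b a e.
Proof.
case: e => [[[] i j]] /=; rewrite ?edge_s_EV ?edge_s_EH ?edge_s_ED //.
by rewrite addnC (addrC j).
Qed.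
End Swap.

(* For a < b, the edges crossed by L_t in the strip k <= x <= k+1, in order. *)
Definition strip_wall a b k : edge := (EV, k%:Z, (yfloor a b k)%:Z).
Definition strip_cut a b k : seq edge :=
  let f := yfloor a b k in
  if climbs a b k then [:: (ED, k%:Z, f%:Z); (EH, k%:Z, f.+1%:Z); (ED, k%:Z, f.+1%:Z)]
  else [:: (ED, k%:Z, f%:Z)].
Definition strip_edges a b k : seq edge :=
  if k is 0 then strip_cut a b k else strip_wall a b k :: strip_cut a b k.
Definition strip_path a b : seq edge := flatten [seq strip_edges a b k | k <- iota 0 b].

Lemma strip_pathE a b : (0 < b)%N -> strip_path a b =
  strip_cut a b 0 ++ flatten [seq strip_wall a b k :: strip_cut a b k | k <- iota 1 b.-1].
Proof.
case: b => // b _; rewrite /strip_path /=; congr (_ ++ flatten _).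
by apply/eq_in_map => -[|k]; rewrite ?mem_iota.
Qed.

Lemma strip_pathP a b e : reflect
  (exists2 k, (k < b)%N & (e \in strip_cut a b k) || (0 < k)%N && (e == strip_wall a b k))
  (e \in strip_path a b).
Proof.
apply: (iffP flatten_mapP) => [[k k_in e_in]|[k k_lt e_in]].
  exists k; first by rewrite mem_iota in k_in.
  by move: e_in {k_in}; case: k => [|k] /=; rewrite ?inE ?orbF // orbC.
exists k; first by rewrite mem_iota.
by move: e_in {k_lt}; case: k => [|k] /=; rewrite ?inE ?orbF // orbC.
Qed.

Lemma sorted_strip_path a b : (0 < a)%N -> (0 < b)%N ->
  sorted (relpre (edge_s a b) <%O) (strip_path a b).
Proof.
move=> a_gt0 b_gt0; have ab_gt0 : (0 < a + b)%N by rewrite addn_gt0 a_gt0.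
apply: (sorted_flatten_blocks (g := fun k => (k%:Z)%:~R / b%:R)) => [i j ij|k _].
  by rewrite ler_ratio //; nia.
have := yfloor_spec a k b_gt0; rewrite /strip_edges /strip_cut /climbs.
case: k => [|k]; case: ifP => climb spec /=;
  rewrite ?edge_s_EV ?edge_s_EH ?edge_s_ED // ?ltr_ratio ?ler_ratio //.
all: nia.
Qed.

Section StripPath.
Variables a b : nat.
Hypotheses (a_gt0 : (0 < a)%N) (ab : (a < b)%N) (cop : coprime a b).
Let b_gt0 : (0 < b)%N. Proof. exact: ltn_trans a_gt0 ab. Qed.

Lemma strip_path_meets e : e \in strip_path a b -> meets a b e.
Proof.
case/strip_pathP => k k_lt /orP[|/andP[k_gt0 /eqP->]]; last first.
  have k_in : (0 < k < b)%N by rewrite k_gt0.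
  have := yfloor_lt cop k_in; have := yfloor_spec a k b_gt0.
  by rewrite meets_EV; nia.
have := yfloor_spec a k b_gt0; rewrite /strip_cut /climbs; case: ifP => climb spec.
  by rewrite !inE => /or3P[] /eqP->; rewrite ?meets_ED ?meets_EH //; nia.
by rewrite inE => /eqP->; rewrite meets_ED //; nia.
Qed.

Lemma meets_strip_path e : meets a b e -> e \in strip_path a b.
Proof.
case: e => [[[] i j]]; rewrite ?meets_EH ?meets_ED ?meets_EV // => m.
all: have [k ?] : exists k : nat, i = k by exists (absz i); nia.
all: have [n ?] : exists n : nat, j = n by exists (absz j); nia.
all: subst i j.
all: have spec := yfloor_spec a k b_gt0.
- have k_lt : (k < b)%N by rewrite -(ltn_pmul2r a_gt0); nia.
  have n_eq : n = (yfloor a b k).+1 by nia.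
  have climb : climbs a b k by rewrite /climbs -n_eq; nia.
  apply/strip_pathP; exists k => //.
  by rewrite /strip_cut climb n_eq !inE eqxx orbT.
- have ab_gt0 : (0 < a + b)%N by rewrite addn_gt0 a_gt0.
  have k_lt : (k < b)%N by rewrite -(ltn_pmul2r ab_gt0); nia.
  apply/strip_pathP; exists k => //; rewrite /strip_cut.
  have [n_eq|n_eq] : n = yfloor a b k \/ n = (yfloor a b k).+1 by nia.
    by case: ifP; rewrite n_eq !inE eqxx.
  have climb : climbs a b k by rewrite /climbs -n_eq; nia.
  by rewrite climb n_eq !inE eqxx !orbT.
- have n_eq : n = yfloor a b k by symmetry; apply: yfloor_unique; nia.
  have k_lt : (k < b)%N.
    rewrite ltn_neqAle; apply/andP; split; last by nia.
    by apply/eqP => k_eq; move: n_eq; rewrite k_eq /yfloor mulKn //; nia.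
  apply/strip_pathP; exists k => //; apply/orP; right.
  by rewrite n_eq /strip_wall eqxx andbT; nia.
Qed.

Lemma mem_strip_path e : (e \in strip_path a b) = meets a b e.
Proof. by apply/idP/idP => [/strip_path_meets | /meets_strip_path]. Qed.

Lemma crossed_edges_strip : crossed_edges a b = strip_path a b.
Proof.
apply: crossed_edgesE => // [|e]; first exact: sorted_strip_path.
by rewrite mem_strip_path.
Qed.
End StripPath.

Lemma crossed_edges_swap a b : (0 < b)%N -> (b < a)%N -> coprime a b ->
  crossed_edges a b = map edge_swap (strip_path b a).
Proof.
move=> b_gt0 ba cop; have a_gt0 : (0 < a)%N := ltn_trans b_gt0 ba.
apply: crossed_edgesE => //.
  rewrite sorted_map; apply: sub_sorted (sorted_strip_path b_gt0 a_gt0) => e1 e2.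
  by rewrite /= !edge_s_swap.
move=> e; rewrite -[in LHS](edge_swapK e) meets_swap // -[in RHS](edge_swapK e).
by rewrite (mem_map (inv_inj edge_swapK)) mem_strip_path // coprime_sym.
Qed.

Lemma between_seps_strip_path a b (L : edge -> sletter) (sep : pred sletter) :
  (0 < b)%N -> (forall k, sep (L (strip_wall a b k))) ->
  (forall k, all (predC sep) (map L (strip_cut a b k))) ->
  between_seps sep (map L (strip_path a b)) = [seq map L (strip_cut a b k) | k <- iota 1 b.-2].
Proof.
move=> b_gt0 wall_sep cut_free; rewrite strip_pathE // map_cat map_flatten -map_comp.
rewrite (between_seps_blocks (z := L \o strip_wall a b) (c := map L \o strip_cut a b)) //.
  by rewrite size_iota take_iota (minn_idPl (leq_pred _)).
by move=> k; rewrite /= wall_sep cut_free.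
Qed.

Lemma w_lt_strip a b : (0 < a)%N -> (a < b)%N -> coprime a b ->
  w_lt a b = Some [seq (if climbs a b k then cq else cp) | k <- iota 1 b.-2].
Proof.
move=> a_gt0 ab cop; have b_gt0 : (0 < b)%N := ltn_trans a_gt0 ab.
rewrite /w_lt /omega crossed_edges_strip // between_seps_strip_path // => [|k].
  rewrite -optseq_Some -!map_comp; congr optseq; apply: eq_map => k /=.
  by rewrite /strip_cut; case: climbs.
by rewrite /strip_cut; case: climbs.
Qed.

Lemma w_gt_strip a b : (0 < b)%N -> (b < a)%N -> coprime a b ->
  w_gt a b = Some [seq (if climbs b a k then cq else cr) | k <- iota 1 a.-2].
Proof.
move=> b_gt0 ba cop; have a_gt0 : (0 < a)%N := ltn_trans b_gt0 ba.
rewrite /w_gt /omega crossed_edges_swap // -map_comp between_seps_strip_path // => [|k].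
  rewrite -optseq_Some -!map_comp; congr optseq; apply: eq_map => k /=.
  by rewrite /strip_cut; case: climbs.
by rewrite /strip_cut; case: climbs.
Qed.

(** * The Cohn path *)

Lemma on_right_nat a b (x y : nat) : on_right a b (ipt2pt (x%:Z, y%:Z)) = (b * y < a * x)%N.
Proof. by rewrite /on_right /cross /= subr_lt0 -!natrM ltr_nat. Qed.

Lemma vrecordE a b i : (0 < b)%N ->
  vrecord a b i = (i%:R / b%:R, (i%:Z, (yfloor a b i)%:Z)).
Proof.
move=> b_gt0; rewrite /vrecord mulrAC -natrM floor_ratio // divn_ratioE //.
case: eqP => // not_exact; rewrite on_right_nat ifT //.
by have := yfloor_spec a i b_gt0; rewrite /yfloor; lia.
Qed.

Lemma hrecordE a b j : (0 < a)%N ->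
  hrecord a b j = (j%:R / a%:R, ((xceil a b j)%:Z, j%:Z)).
Proof.
move=> a_gt0; rewrite /hrecord mulrAC -natrM floor_ratio // divn_ratioE //.
case: eqP => [exact_div | not_exact].
  by congr (_, (Posz _, _)); symmetry; apply: xceil_unique => //; lia.
rewrite on_right_nat ifF; last by nia.
congr (_, (_, _)); rewrite -PoszD addn1; congr Posz.
by symmetry; apply: xceil_unique => //; nia.
Qed.

Definition cohn_records a b : seq (rat * ipt) :=
  map (vrecord a b) (iota 0 b.+1) ++ map (hrecord a b) (iota 0 a.+1).

Lemma cohn_record_lt a b r : (0 < a)%N -> (a <= b)%N -> r \in cohn_records a b ->
  let x := absz r.2.1 in
  [/\ r.2 = (x%:Z, (yfloor a b x)%:Z), (x <= b)%N & x%:R - 1 < b%:R * r.1 <= x%:R].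
Proof.
move=> a_gt0 ab; have b_gt0 : (0 < b)%N by lia.
have [b_neq0 a_pos] : (b%:R : rat) != 0 /\ (0 : rat) < a%:R by rewrite gt_eqF ?ltr0n.
rewrite mem_cat => /orP[] /mapP[k]; rewrite mem_iota => k_in ->.
  by rewrite vrecordE //= mulrC divfK // lexx andbT; split => //; lra.
rewrite /= hrecordE //= yfloor_xceil //; have := xceil_spec b k a_gt0.
rewrite mulrA ltr_pdivlMr // ler_pdivrMr // => x_spec; split => //; first nia.
have := x_spec; rewrite -!(ltr_nat rat) -!(ler_nat rat) !natrM natrD => /andP[? ?].
by apply/andP; split; lra.
Qed.

Lemma cohn_record_gt a b r : (0 < b)%N -> (b <= a)%N -> r \in cohn_records a b ->
  let y := absz r.2.2 in
  [/\ r.2 = ((xceil a b y)%:Z, y%:Z), (y <= a)%N & y%:R <= a%:R * r.1 < y%:R + 1].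
Proof.
move=> b_gt0 ba; have a_gt0 : (0 < a)%N by lia.
have [a_neq0 b_pos] : (a%:R : rat) != 0 /\ (0 : rat) < b%:R by rewrite gt_eqF ?ltr0n.
rewrite mem_cat => /orP[] /mapP[k]; rewrite mem_iota => k_in ->; last first.
  by rewrite /= hrecordE //= mulrC divfK // lexx /=; split => //; lra.
rewrite /= vrecordE //= xceil_yfloor //; have := yfloor_spec a k b_gt0.
rewrite mulrA ler_pdivlMr // ltr_pdivrMr // => y_spec; split => //; first nia.
have := y_spec; rewrite -!(ltr_nat rat) -!(ler_nat rat) !natrM natrD => /andP[? ?].
by apply/andP; split; lra.
Qed.

Lemma cohn_points_lt a b : (0 < a)%N -> (a <= b)%N ->
  cohn_points a b = [seq (x%:Z, (yfloor a b x)%:Z) | x <- iota 0 b.+1].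
Proof.
move=> a_gt0 ab; have b_pos : (0 : rat) < b%:R by rewrite ltr0n; lia.
apply: (undup_sort_snd (idx := fun r => absz r.2.1)).
- by move=> x y [->].
- by move=> r /(cohn_record_lt a_gt0 ab)[].
- move=> r1 r2 /(cohn_record_lt a_gt0 ab)[_ _ /andP[lo1 _]].
  move=> /(cohn_record_lt a_gt0 ab)[_ _ /andP[_ hi2]] s12.
  have : b%:R * r1.1 <= b%:R * r2.1 by rewrite ler_pM2l.
  by move=> le12; rewrite -ltnS -(ltr_nat rat) -addn1 natrD; lra.
- move=> n n_le; exists (vrecord a b n); last by rewrite vrecordE //; lia.
  by rewrite mem_cat map_f ?mem_iota.
Qed.

Lemma cohn_points_gt a b : (0 < b)%N -> (b <= a)%N ->
  cohn_points a b = [seq ((xceil a b y)%:Z, y%:Z) | y <- iota 0 a.+1].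
Proof.
move=> b_gt0 ba; have a_pos : (0 : rat) < a%:R by rewrite ltr0n; lia.
apply: (undup_sort_snd (idx := fun r => absz r.2.2)).
- by move=> x y [_ ->].
- by move=> r /(cohn_record_gt b_gt0 ba)[].
- move=> r1 r2 /(cohn_record_gt b_gt0 ba)[_ _ /andP[lo1 _]].
  move=> /(cohn_record_gt b_gt0 ba)[_ _ /andP[_ hi2]] s12.
  have : a%:R * r1.1 <= a%:R * r2.1 by rewrite ler_pM2l.
  by move=> le12; rewrite -ltnS -(ltr_nat rat) -addn1 natrD; lra.
- move=> n n_le; exists (hrecord a b n); last by rewrite hrecordE //; lia.
  by rewrite mem_cat orbC map_f ?mem_iota.
Qed.

Lemma cohn_word_xsteps a b n (f : nat -> nat) (c : nat -> bool) :
  cohn_points a b = [seq (x%:Z, (f x)%:Z) | x <- iota 0 n.+1] ->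
  (forall k, (k < n)%N -> f k.+1 = (f k + c k)%N) ->
  cohn_word a b = Some [seq (if c k then cq else cp) | k <- iota 0 n].
Proof.
move=> points steps; rewrite /cohn_word points zip_behead_iota -map_comp -optseq_Some -map_comp.
congr optseq; apply/eq_in_map => k; rewrite mem_iota => /andP[_ k_lt] /=.
have dx : k.+1%:Z - k%:Z = 1 by lia.
have dy : (f k + c k)%N%:Z - (f k)%:Z = c k by lia.
by rewrite /seg_letter steps //= dx dy; case: (c k).
Qed.

Lemma cohn_word_ysteps a b n (g : nat -> nat) (c : nat -> bool) :
  cohn_points a b = [seq ((g y)%:Z, y%:Z) | y <- iota 0 n.+1] ->
  (forall k, (k < n)%N -> g k.+1 = (g k + c k)%N) ->
  cohn_word a b = Some [seq (if c k then cq else cr) | k <- iota 0 n].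
Proof.
move=> points steps; rewrite /cohn_word points zip_behead_iota -map_comp -optseq_Some -map_comp.
congr optseq; apply/eq_in_map => k; rewrite mem_iota => /andP[_ k_lt] /=.
have dx : (g k + c k)%N%:Z - (g k)%:Z = c k by lia.
have dy : k.+1%:Z - k%:Z = 1 by lia.
by rewrite /seg_letter steps //= dx dy; case: (c k).
Qed.

(* In the last strip the path climbs to the corner (b, a) of the lattice, although
   [climbs] is false there. *)
Lemma cohn_word_lt a b : (0 < a)%N -> (a < b)%N -> coprime a b ->
  cohn_word a b = Some (cp :: rcons [seq (if climbs a b k then cq else cp) | k <- iota 1 b.-2] cq).
Proof.
move=> a_gt0 ab cop; have [b_gt0 b_gt1] : (0 < b)%N /\ (1 < b)%N by lia.
have flb : yfloor a b b = a by apply: yfloor_unique; nia.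
have flb1 : yfloor a b b.-1 = a.-1 by apply: yfloor_unique; nia.
rewrite (@cohn_word_xsteps _ _ _ _ (fun k => climbs a b k || (k == b.-1))
  (cohn_points_lt a_gt0 (ltnW ab))) => [|k k_lt].
  congr Some; rewrite (iota0_first_last b_gt1) /= map_rcons eqxx orbT.
  congr (_ :: rcons _ _); first by rewrite /climbs /yfloor mul0n div0n ifF //; lia.
  apply/eq_in_map => k; rewrite mem_iota => k_in.
  by rewrite (_ : (k == b.-1) = false) ?orbF //; lia.
have [k_last | k_mid] := eqVneq k b.-1; last first.
  by rewrite orbF yfloor_succ //; [exact: ltnW | lia].
by rewrite k_last prednK // flb flb1 orbT; lia.
Qed.

(* In the first strip the path climbs from the origin, although [climbs] is false
   there. *)
Lemma cohn_word_gt a b : (0 < b)%N -> (b < a)%N -> coprime a b ->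
  cohn_word a b = Some (cq :: rcons [seq (if climbs b a k then cq else cr) | k <- iota 1 a.-2] cr).
Proof.
move=> b_gt0 ba cop; have [a_gt0 a_gt1] : (0 < a)%N /\ (1 < a)%N by lia.
have xc0 : xceil a b 0 = 0%N by apply: xceil_unique; lia.
have xc1 : xceil a b 1 = 1%N by apply: xceil_unique; lia.
have xca : xceil a b a = b by apply: xceil_unique; nia.
have xca1 : xceil a b a.-1 = b by apply: xceil_unique; nia.
have not_climbs_last : ~~ climbs b a a.-1.
  rewrite /climbs (_ : yfloor b a a.-1 = b.-1); last by apply: yfloor_unique; nia.
  by rewrite !prednK // mulnC ltnn.
rewrite (@cohn_word_ysteps _ _ _ _ (fun k => (k == 0%N) || climbs b a k)
  (cohn_points_gt b_gt0 (ltnW ba))) => [|k k_lt].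
  congr Some; rewrite (iota0_first_last a_gt1) /= map_rcons.
  congr (_ :: rcons _ _); last by rewrite (negbTE not_climbs_last) orbF ifF //; lia.
  apply/eq_in_map => k; rewrite mem_iota => k_in.
  by rewrite (_ : (k == 0%N) = false) //; lia.
have [-> | k_gt0] := posnP k; first by rewrite xc0 xc1.
have [k_last | k_mid] := eqVneq k a.-1.
  by rewrite k_last prednK // xca xca1 (negbTE not_climbs_last) addn0.
have cop' : coprime b a by rewrite coprime_sym.
by rewrite !xceil_succ_yfloor ?yfloor_succ //; lia.
Qed.

Theorem theorem4p7 (a b : nat) (ha : (0 < a)%N) (hb : (0 < b)%N) (hab : coprime a b)
    (hne : a != b) :
  ((a < b)%N -> exists w, w_lt a b = Some w /\ cohn_word a b = Some (cp :: rcons w cq)) /\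
  ((b < a)%N -> exists w, w_gt a b = Some w /\ cohn_word a b = Some (cq :: rcons w cr)).
Proof.
split=> lt_ab; eexists; split.
- exact: w_lt_strip.
- exact: cohn_word_lt.
- exact: w_gt_strip.
- exact: cohn_word_gt.
Qed.
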